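(* Let $T\colon X\to X$ be a Borel measurable map of a compact metric space and let $\lambda$ be a fully supported non-singular Borel probability measure which is $\limsup$ full. If $\lambda$ is equivalent to a $T$-invariant probability measure $\mu$ (i.e. $\mu\ll\lambda$ and $\lambda\ll\mu$), then $\lambda$ is full.
   Context: $\lambda$ is non-singular if $\lambda(A)=0$ iff $\lambda(T^{-1}A)=0$; fully supported if every nonempty open set has positive measure. $\lambda$ is $\limsup$ full if $\lambda(A)>0$ implies $\limsup_n\lambda(T^n(A))=1$, and full if $\lambda(A)>0$ implies $\lim_n\lambda(T^n(A))=1$ (images measured with the completion). *)

From HB Require Import structures.
From mathcomp Require Import all_boot all_order all_algebra.
From mathcomp Require Import all_classical all_reals all_analysis.
Set Implicit Arguments. Unset Strict Implicit. Unset Printing Implicit Defensive.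
Import Order.TTheory GRing.Theory Num.Theory.
Import numFieldNormedType.Exports.
Local Open Scope classical_set_scope.
Local Open Scope ring_scope.

(* Metric spaces with a distinguished point (measurable types in MathComp-
   Analysis are required to be pointed; a space carrying a probability
   measure is nonempty anyway). *)
#[short(type="pmetricType")]
HB.structure Definition PointedMetric (K : numDomainType) :=
  { M of Metric K M & isPointed M }.

Notation borel X := (g_sigma_algebraType (@open X)).

(* Measure of an arbitrary set B with respect to the completion of mu:
   for B in the completed sigma-algebra this is exactly the completed
   measure of B (it equals inf { mu C | C measurable, B <= C }). *)
Definition completion_measure {d} {T : measurableType d} {R : realType}
  (mu : set T -> \bar R) (B : set T) : \bar R :=
  ereal_inf [set mu C | C in [set C | measurable C /\ B `<=` C]].

Definition fimage {X : Type} (T : X -> X) (n : nat) (A : set X) : set X :=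
  (iter n T) @` A.

Section defs.
Context {R : realType} (X : pmetricType R).
Local Notation BX := (borel X).

Definition fully_supported (lam : set BX -> \bar R) :=
  forall U : set X, open U -> U !=set0 -> (0 < lam U)%E.

Definition non_singular (T : X -> X) (lam : set BX -> \bar R) :=
  forall A : set BX, measurable A -> (lam A = 0)%E <-> (lam (T @^-1` A) = 0)%E.

Definition limsup_full (T : X -> X) (lam : set BX -> \bar R) :=
  forall A : set BX, measurable A -> (0 < lam A)%E ->
    limn_esup (fun n => completion_measure lam (fimage T n A)) = 1%E.

Definition full (T : X -> X) (lam : set BX -> \bar R) :=
  forall A : set BX, measurable A -> (0 < lam A)%E ->
    (fun n => completion_measure lam (fimage T n A)) @ \oo --> 1%E.

Definition T_invariant (T : X -> X) (mu : set BX -> \bar R) :=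
  forall A : set BX, measurable A -> mu (T @^-1` A) = mu A.
End defs.

(* Let [a n] and [b n] be the completed lambda- and mu-measures of [T^n(A)].
   Invariance of mu makes [b] nondecreasing, since [T^-1(C)] covers [T^n(A)]
   whenever [C] covers [T^(n+1)(A)].  Mutual absolute continuity of two
   probabilities says, in epsilon-delta form, that a set of measure close to 1
   for one of them has measure close to 1 for the other.  By limsup-fullness
   some [a n0] is close to 1, hence so is [b n0], hence [b n] for all
   [n >= n0], hence [a n] for all [n >= n0]: the sequence [a] tends to 1. *)
From HB Require Import structures.
From mathcomp Require Import all_boot all_order all_algebra.
From mathcomp Require Import all_classical all_reals all_analysis.
From mathcomp Require Import lra.
Set Implicit Arguments. Unset Strict Implicit.
Import Order.TTheory GRing.Theory Num.Theory.
Import numFieldNormedType.Exports.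
Local Open Scope classical_set_scope.
Local Open Scope ring_scope.

Lemma limn_esup_gt_exists (R : realType) (u : (\bar R)^nat) (r : \bar R) :
  (r < limn_esup u)%E -> exists n, (r < u n)%E.
Proof.
move=> r_lt; apply: contrapT => /forallNP u_le.
suff : (limn_esup u <= r)%E by rewrite leNgt r_lt.
apply: ge_ereal_inf; exists (ereal_sup (u @` setT)).
  by exists setT => //; exact: filterT.
by apply: ge_ereal_sup => _ [n _ <-]; rewrite leNgt; apply/negP; exact: u_le.
Qed.

Lemma cvge_le_eventually_ge (R : realType) (u : (\bar R)^nat) (l : R) :
  (forall n, 0 <= u n <= l%:E)%E ->
  (forall e : R, 0 < e -> \forall n \near \oo, ((l - e)%:E <= u n)%E) ->
  u @ \oo --> l%:E.
Proof.
move=> u_bnd u_near; have u_fin n : u n \is a fin_num.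
  by have /andP[u0 ul] := u_bnd n; rewrite ge0_fin_numE// (le_lt_trans ul) ?ltry.
apply/fine_cvgP; split; first exact: nearW.
apply/cvgrPdist_le => e e0; near=> n.
have /andP[_] := u_bnd n; have : ((l - e)%:E <= u n)%E by near: n; exact: u_near.
rewrite -(fineK (u_fin n)) !lee_fin => le_u u_le.
by rewrite ler_norml /=; apply/andP; split; lra.
Unshelve. all: by end_near. Qed.

Lemma abs_continuous_epsilon_delta d (T : measurableType d) (R : realType)
    (P : {finite_measure set T -> \bar R}) (Q : {measure set T -> \bar R}) :
  P `<< Q -> forall e : R, 0 < e -> exists2 del : R, 0 < del &
    forall A, measurable A -> (Q A < del%:E)%E -> (P A < e%:E)%E.
Proof.
move=> PQ e e0.
have [Pos [Neg PN]] := Hahn_decomposition (charge_of_finite_measure P).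
have [del [del0 small]] := charge_variation_continuous PN PQ e0.
exists del => // A mA QA; apply: le_lt_trans (small A mA QA).
exact: le_trans (lee_abs _) (abse_charge_variation PN mA).
Qed.

Section completion_measure.
Context d (T : measurableType d) (R : realType).
Implicit Types (mu : {measure set T -> \bar R}) (B C : set T).

Lemma completion_measure_ge0 mu B : (0 <= completion_measure mu B)%E.
Proof. by apply: le_ereal_inf_tmp => _ [C _ <-]. Qed.

Lemma completion_measure_le mu B C :
  measurable C -> B `<=` C -> (completion_measure mu B <= mu C)%E.
Proof. by move=> mC BC; apply: ereal_inf_lbound; exists C. Qed.

Lemma completion_measure_le1 (P : probability T R) B :
  (completion_measure P B <= 1)%E.
Proof. by rewrite -(probability_setT P); exact: completion_measure_le. Qed.

Lemma completion_measure_image mu (f : T -> T) B :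
  measurable_fun setT f ->
  (forall C, measurable C -> mu (f @^-1` C) = mu C) ->
  (completion_measure mu B <= completion_measure mu (f @` B))%E.
Proof.
move=> mf f_inv; apply: le_ereal_inf_tmp => _ [C [mC fBC] <-].
have mfC : measurable (f @^-1` C) by rewrite -[_ @^-1` _]setTI; exact: mf.
rewrite -f_inv//; apply: completion_measure_le => // x Bx.
by apply: fBC; exists x.
Qed.

Lemma nondecreasing_completion_measure_fimage mu (f : T -> T) B :
  measurable_fun setT f ->
  (forall C, measurable C -> mu (f @^-1` C) = mu C) ->
  nondecreasing_seq (fun n => completion_measure mu (fimage f n B)).
Proof.
move=> mf f_inv; apply/nondecreasing_seqP => n.
have -> : fimage f n.+1 B = f @` fimage f n B.
  by rewrite /fimage -image_comp.
exact: completion_measure_image.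
Qed.

Lemma completion_measure_near1 (P Q : probability T R) : P `<< Q ->
  forall e : R, 0 < e -> exists2 del : R, 0 < del &
    forall B, ((1 - del)%:E < completion_measure Q B)%E ->
      ((1 - e)%:E <= completion_measure P B)%E.
Proof.
move=> PQ e e0; have [del del0 small] := abs_continuous_epsilon_delta PQ e0.
exists del => // B QB; apply: le_ereal_inf_tmp => _ [C [mC BC] <-].
have QC : ((1 - del)%:E < Q C)%E.
  exact: lt_le_trans QB (completion_measure_le _ mC BC).
have : (Q (~` C) < del%:E -> P (~` C) < e%:E)%E := small _ (measurableC mC).
rewrite !probability_setC// -(fineK (fin_num_measure P _ mC)).
rewrite -(fineK (fin_num_measure Q _ mC)) in QC *.
by rewrite -!EFinB !lte_fin lee_fin; rewrite lte_fin in QC; lra.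
Qed.

End completion_measure.

Theorem mainTheorem6 (R : realType) (X : pmetricType R)
  (T : X -> X) (lam mu : probability (borel X) R) :
  compact [set: X] ->
  measurable_fun [set: borel X] (T : borel X -> borel X) ->
  fully_supported lam ->
  non_singular T lam ->
  limsup_full T lam ->
  T_invariant T mu ->
  mu `<< lam -> lam `<< mu ->
  full T lam.
Proof.
move=> _ mT _ _ lam_limsup mu_inv mu_lam lam_mu A mA lamA.
have mu_mono := @nondecreasing_completion_measure_fimage _ _ _ mu T A mT mu_inv.
apply: cvge_le_eventually_ge => [n|e e0].
  by rewrite completion_measure_ge0 completion_measure_le1.
have [del del0 lam_large] := completion_measure_near1 lam_mu e0.
have del_half : 1 - del < 1 - del / 2 by lra.
have [del' del'0 mu_large] :=
  completion_measure_near1 mu_lam (divr_gt0 del0 (ltr0Sn _ 1)).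
have [n0 lam_n0] : exists n0,
    ((1 - del')%:E < completion_measure lam (fimage T n0 A))%E.
  by apply: limn_esup_gt_exists; rewrite lam_limsup// lte_fin; lra.
near=> n; have n0_le_n : (n0 <= n)%N by near: n; exists n0.
apply: lam_large; apply: lt_le_trans (mu_mono _ _ n0_le_n).
by apply: lt_le_trans (mu_large _ lam_n0); rewrite lte_fin.
Unshelve. all: by end_near. Qed.
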